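(* For every set of formulas $\Gamma$ and every formula $\alpha$: $\Gamma\vdash_{L_1^2}\alpha$ if and only if $\Gamma\vDash_{\mathcal{M}_1^2}\alpha$.
   Context: Formulas are built from a countable set of propositional variables using unary $\neg,\circ$ and binary $\land,\lor,\to$; $\circ^0\alpha=\alpha$, $\circ^{m+1}\alpha=\circ(\circ^m\alpha)$, $\alpha\leftrightarrow\beta:=(\alpha\to\beta)\land(\beta\to\alpha)$. mbC is the Hilbert calculus with the axiom schemas of a standard axiomatization of positive classical propositional logic in $\land,\lor,\to$, plus (TND) $\alpha\lor\neg\alpha$ and (bc1) $\circ\alpha\to(\alpha\to(\neg\alpha\to\beta))$, with modus ponens as only rule; mbCciw is mbC plus (ciw) $\circ\alpha\lor(\alpha\land\neg\alpha)$; $L_1^0$ is mbCciw plus $\circ\circ\circ\alpha$; $L_1^1$ is $L_1^0$ plus $\neg\neg\alpha\to\alpha$ and $\alpha\to\neg\neg\alpha$; $L_1^2$ is $L_1^1$ plus $\neg\circ\neg\alpha\leftrightarrow\neg\circ\alpha$. $\Gamma\vdash_L\alpha$ means derivability in $L$. Semantics: with Boolean operations $\land,\lor,\to,\sim$ on $\{0,1\}$, let $\mathbb{B}_1^0=\{x\in\{0,1\}^3: x_1\lor x_2=1,\ x_3\lor\sim(x_1\land x_2)=1\}$. The multialgebra $\mathcal{B}_1^2$ on $\mathbb{B}_1^0$ has $x\# y=\{z\in\mathbb{B}_1^0: z_1=x_1\# y_1\}$ for $\#\in\{\land,\lor,\to\}$, $\neg x=\{(x_2,x_1,x_3)\}$,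 $\circ x=\{(\sim(x_1\land x_2),x_3,x_3\land\sim(x_1\land x_2))\}$. $D_1^0=\{x:x_1=1\}$, $\mathcal{M}_1^2=(\mathcal{B}_1^2,D_1^0)$. Valuations over $\mathcal{M}_1^2$ are maps $h$ from formulas to $\mathbb{B}_1^0$ with $h(\alpha\#\beta)\in h(\alpha)\#h(\beta)$, $h(\neg\alpha)\in\neg h(\alpha)$, $h(\circ\alpha)\in\circ h(\alpha)$; $\Gamma\vDash_{\mathcal{M}_1^2}\alpha$ iff every valuation $h$ with $h[\Gamma]\subseteq D_1^0$ has $h(\alpha)\in D_1^0$. *)

From Stdlib Require Import Bool.

Inductive formula : Type :=
| Var  : nat -> formula
| Neg  : formula -> formula
| Circ : formula -> formula
| And  : formula -> formula -> formula
| Or   : formula -> formula -> formula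
| Imp  : formula -> formula -> formula.

Definition Iff (a b : formula) : formula := And (Imp a b) (Imp b a).

Fixpoint circ_n (m : nat) (a : formula) : formula :=
  match m with O => a | S m' => Circ (circ_n m' a) end.

(* Axiom schemas of L_1^2. Positive classical logic: the standard
   axiomatization Ax1--Ax9 used for mbC (Carnielli--Coniglio). *)
Inductive axiom_L12 : formula -> Prop :=
| Ax1 a b : axiom_L12 (Imp a (Imp b a))
| Ax2 a b c : axiom_L12 (Imp (Imp a b) (Imp (Imp a (Imp b c)) (Imp a c)))
| Ax3 a b : axiom_L12 (Imp a (Imp b (And a b)))
| Ax4 a b : axiom_L12 (Imp (And a b) a)
| Ax5 a b : axiom_L12 (Imp (And a b) b)
| Ax6 a b : axiom_L12 (Imp a (Or a b))
| Ax7 a b : axiom_L12 (Imp b (Or a b))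
| Ax8 a b c : axiom_L12 (Imp (Imp a c) (Imp (Imp b c) (Imp (Or a b) c)))
| Ax9 a b : axiom_L12 (Or a (Imp a b))
| AxTND a : axiom_L12 (Or a (Neg a))
| AxBc1 a b : axiom_L12 (Imp (Circ a) (Imp a (Imp (Neg a) b)))
| AxCiw a : axiom_L12 (Or (Circ a) (And a (Neg a)))
| AxCCC a : axiom_L12 (circ_n 3 a)
| AxCf a : axiom_L12 (Imp (Neg (Neg a)) a)
| AxCe a : axiom_L12 (Imp a (Neg (Neg a)))
| AxNCN a : axiom_L12 (Iff (Neg (Circ (Neg a))) (Neg (Circ a))).

Inductive derivable_L12 (Gamma : formula -> Prop) : formula -> Prop :=
| D_hyp a : Gamma a -> derivable_L12 Gamma a
| D_ax a : axiom_L12 a -> derivable_L12 Gamma a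
| D_mp a b : derivable_L12 Gamma a -> derivable_L12 Gamma (Imp a b) ->
             derivable_L12 Gamma b.

(* Truth values: triples in {0,1}^3, 1 = true. *)
Definition tv : Type := (bool * bool * bool)%type.
Definition t1 (x : tv) : bool := let '(a, _, _) := x in a.
Definition t2 (x : tv) : bool := let '(_, b, _) := x in b.
Definition t3 (x : tv) : bool := let '(_, _, c) := x in c.

Definition inB (x : tv) : Prop :=
  (t1 x || t2 x) = true /\ (t3 x || negb (t1 x && t2 x)) = true.

(* Multioperations of B_1^2, as membership predicates z \in x # y etc. *)
Definition mand (x y z : tv) : Prop := inB z /\ t1 z = (t1 x && t1 y).
Definition mor  (x y z : tv) : Prop := inB z /\ t1 z = (t1 x || t1 y).
Definition mimp (x y z : tv) : Prop := inB z /\ t1 z = implb (t1 x) (t1 y).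
Definition mneg (x z : tv) : Prop := z = (t2 x, t1 x, t3 x).
Definition mcirc (x z : tv) : Prop :=
  z = (negb (t1 x && t2 x), t3 x, t3 x && negb (t1 x && t2 x)).

Definition designated (x : tv) : Prop := t1 x = true.

Definition valuation (h : formula -> tv) : Prop :=
  (forall a, inB (h a)) /\
  (forall a b, mand (h a) (h b) (h (And a b))) /\
  (forall a b, mor (h a) (h b) (h (Or a b))) /\
  (forall a b, mimp (h a) (h b) (h (Imp a b))) /\
  (forall a, mneg (h a) (h (Neg a))) /\
  (forall a, mcirc (h a) (h (Circ a))).

Definition entails_M12 (Gamma : formula -> Prop) (a : formula) : Prop :=
  forall h, valuation h ->
    (forall g, Gamma g -> designated (h g)) -> designated (h a).

From Stdlib Require Import Bool Arith Classical ClassicalEpsilon Cantor.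

(* Soundness: every axiom of L_1^2 takes a designated value under every
   valuation (a truth-table check over the triples of B_1^0), and modus ponens
   preserves designation because the first coordinate of an implication is
   computed classically.

   Completeness: if alpha does not follow from Gamma, enumerate the formulas and
   extend Gamma to a theory Delta that is maximal among those not deriving
   alpha.  Such a Delta behaves classically on the positive connectives, and the
   map  f |-> (f in Delta, ~f in Delta, ~o f in Delta)  is a valuation: the
   axioms of L_1^2 are exactly what makes it respect the multioperations of
   B_1^2.  It designates Gamma but not alpha. *)

Section Soundness.
Variable h : formula -> tv.
Hypothesis h_val : valuation h.

Lemma valuation_inB a : inB (h a).
Proof. apply h_val. Qed.

Lemma valuation_and a b : t1 (h (And a b)) = t1 (h a) && t1 (h b).
Proof. apply h_val. Qed.

Lemma valuation_or a b : t1 (h (Or a b)) = t1 (h a) || t1 (h b).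
Proof. apply h_val. Qed.

Lemma valuation_imp a b : t1 (h (Imp a b)) = implb (t1 (h a)) (t1 (h b)).
Proof. apply h_val. Qed.

Lemma valuation_neg a : h (Neg a) = (t2 (h a), t1 (h a), t3 (h a)).
Proof. apply h_val. Qed.

Lemma valuation_circ a :
  h (Circ a) = (negb (t1 (h a) && t2 (h a)), t3 (h a),
                t3 (h a) && negb (t1 (h a) && t2 (h a))).
Proof. apply h_val. Qed.

Lemma axiom_designated a : axiom_L12 a -> designated (h a).
Proof.
  unfold designated; intro Ha; destruct Ha; unfold Iff; cbn [circ_n];
  repeat rewrite ?valuation_and, ?valuation_or, ?valuation_imp,
                 ?valuation_neg, ?valuation_circ; cbn [t1 t2 t3];
  repeat match goal with |- context [h ?x] =>
    let Hx := fresh in pose proof (valuation_inB x) as Hx;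
    destruct (h x) as [[? ?] ?]; unfold inB in Hx; cbn [t1 t2 t3] in Hx end;
  repeat match goal with b : bool |- _ => destruct b end;
  cbn in *; intuition discriminate.
Qed.

End Soundness.

Lemma soundness Gamma a : derivable_L12 Gamma a -> entails_M12 Gamma a.
Proof.
  intros D h h_val HGamma; induction D as [a Ha | a Ha | a b _ IHa _ IHab].
  - auto.
  - exact (axiom_designated h h_val a Ha).
  - unfold designated in *.
    rewrite (valuation_imp h h_val), IHa in IHab; exact IHab.
Qed.

Definition extend (Gamma : formula -> Prop) (p : formula) : formula -> Prop :=
  fun x => Gamma x \/ x = p.

Lemma derivable_weaken Gamma Delta a :
  (forall x, Gamma x -> Delta x) ->
  derivable_L12 Gamma a -> derivable_L12 Delta a.
Proof.
  intros HGD D; induction D as [x Hx | x Hx | x y _ IHx _ IHxy].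
  - apply D_hyp, HGD, Hx.
  - apply D_ax, Hx.
  - exact (D_mp _ _ _ IHx IHxy).
Qed.

Lemma derivable_cut Gamma p b :
  derivable_L12 Gamma p -> derivable_L12 (extend Gamma p) b ->
  derivable_L12 Gamma b.
Proof.
  intros Dp D; induction D as [x [Hx | ->] | x Hx | x y _ IHx _ IHxy].
  - apply D_hyp, Hx.
  - exact Dp.
  - apply D_ax, Hx.
  - exact (D_mp _ _ _ IHx IHxy).
Qed.

Lemma derivable_imp_refl Gamma p : derivable_L12 Gamma (Imp p p).
Proof.
  eapply D_mp; [apply D_ax, (Ax1 p (Imp p p)) |].
  eapply D_mp; [apply D_ax, (Ax1 p p) |].
  apply D_ax, (Ax2 p (Imp p p) p).
Qed.

Lemma deduction Gamma p b :
  derivable_L12 (extend Gamma p) b -> derivable_L12 Gamma (Imp p b).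
Proof.
  intro D; induction D as [x [Hx | ->] | x Hx | x y _ IHx _ IHxy].
  - eapply D_mp; [apply D_hyp, Hx | apply D_ax, Ax1].
  - apply derivable_imp_refl.
  - eapply D_mp; [apply D_ax, Hx | apply D_ax, Ax1].
  - eapply D_mp; [exact IHxy |]. eapply D_mp; [exact IHx | apply D_ax, Ax2].
Qed.

Fixpoint formula_code (f : formula) : nat :=
  match f with
  | Var n => to_nat (0, n)
  | Neg a => to_nat (1, formula_code a)
  | Circ a => to_nat (2, formula_code a)
  | And a b => to_nat (3, to_nat (formula_code a, formula_code b))
  | Or a b => to_nat (4, to_nat (formula_code a, formula_code b))
  | Imp a b => to_nat (5, to_nat (formula_code a, formula_code b))
  end.

Lemma to_nat_inj p q : to_nat p = to_nat q -> p = q.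
Proof.
  intro Hpq. rewrite <- (cancel_of_to p), <- (cancel_of_to q), Hpq.
  reflexivity.
Qed.

Lemma formula_code_inj f g : formula_code f = formula_code g -> f = g.
Proof.
  revert g; induction f; intros g Hfg; destruct g; cbn [formula_code] in Hfg;
  apply to_nat_inj, pair_equal_spec in Hfg; destruct Hfg as [Htag Hfg];
  try discriminate;
  try (apply to_nat_inj, pair_equal_spec in Hfg; destruct Hfg as [Hfg Hfg']);
  f_equal; auto.
Qed.

Definition saturated (alpha : formula) (Delta : formula -> Prop) : Prop :=
  ~ derivable_L12 Delta alpha /\
  forall x, ~ Delta x -> derivable_L12 (extend Delta x) alpha.

Section Lindenbaum.
Variables (Gamma : formula -> Prop) (alpha : formula).
Hypothesis Gamma_alpha : ~ derivable_L12 Gamma alpha.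

Fixpoint lindenbaum_chain (n : nat) : formula -> Prop :=
  match n with
  | O => Gamma
  | S n => fun x => lindenbaum_chain n x \/
      (formula_code x = n /\ ~ derivable_L12 (extend (lindenbaum_chain n) x) alpha)
  end.

Definition lindenbaum_limit (x : formula) : Prop := exists n, lindenbaum_chain n x.

Lemma lindenbaum_chain_mono n m x :
  n <= m -> lindenbaum_chain n x -> lindenbaum_chain m x.
Proof. induction 1; cbn; auto. Qed.

Lemma lindenbaum_chain_not_derivable n :
  ~ derivable_L12 (lindenbaum_chain n) alpha.
Proof.
  induction n as [| n IHn]; cbn; [exact Gamma_alpha |].
  destruct (classic (exists x, formula_code x = n /\
                     ~ derivable_L12 (extend (lindenbaum_chain n) x) alpha))
    as [[x [Hx Hnd]] | Hnone]; intro D.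
  - apply Hnd; revert D; apply derivable_weaken.
    intros y [Hy | [Hy _]]; [left; exact Hy | right; apply formula_code_inj; congruence].
  - apply IHn; revert D; apply derivable_weaken.
    intros y [Hy | Hy]; [exact Hy | exfalso; apply Hnone; eauto].
Qed.

(* Derivations are finite, so they only use one stage of the chain. *)
Lemma derivable_lindenbaum_limit b :
  derivable_L12 lindenbaum_limit b -> exists n, derivable_L12 (lindenbaum_chain n) b.
Proof.
  intro D; induction D as [x [n Hn] | x Hx | x y _ [n1 D1] _ [n2 D2]].
  - exists n; apply D_hyp, Hn.
  - exists 0; apply D_ax, Hx.
  - exists (max n1 n2); apply (D_mp _ x).
    + revert D1; apply derivable_weaken.
      intro z; apply lindenbaum_chain_mono, Nat.le_max_l.
    + revert D2; apply derivable_weaken.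
      intro z; apply lindenbaum_chain_mono, Nat.le_max_r.
Qed.

Lemma lindenbaum_limit_saturated : saturated alpha lindenbaum_limit.
Proof.
  split.
  - intro D; destruct (derivable_lindenbaum_limit alpha D) as [n Dn].
    exact (lindenbaum_chain_not_derivable n Dn).
  - intros x Hx; apply NNPP; intro Hnd; apply Hx.
    exists (S (formula_code x)); right; split; [reflexivity |].
    intro D; apply Hnd; revert D; apply derivable_weaken.
    intros y [Hy | Hy]; [left; exists (formula_code x); exact Hy | right; exact Hy].
Qed.

End Lindenbaum.

Lemma lindenbaum Gamma alpha :
  ~ derivable_L12 Gamma alpha ->
  exists Delta, (forall x, Gamma x -> Delta x) /\ saturated alpha Delta.
Proof.
  intro Gamma_alpha; exists (lindenbaum_limit Gamma alpha); split.
  - intros x Hx; exists 0; exact Hx.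
  - apply lindenbaum_limit_saturated, Gamma_alpha.
Qed.

Section SaturatedTheory.
Context {alpha : formula} {Delta : formula -> Prop}.
Hypothesis Delta_sat : saturated alpha Delta.

Lemma saturated_closed x : derivable_L12 Delta x -> Delta x.
Proof.
  intro D; apply NNPP; intro Hx; apply (proj1 Delta_sat).
  exact (derivable_cut _ _ _ D (proj2 Delta_sat x Hx)).
Qed.

Lemma saturated_not_alpha : ~ Delta alpha.
Proof. intro H; apply (proj1 Delta_sat), D_hyp, H. Qed.

Lemma saturated_axiom a : axiom_L12 a -> Delta a.
Proof. intro Ha; apply saturated_closed, D_ax, Ha. Qed.

Lemma saturated_mp a b : Delta a -> Delta (Imp a b) -> Delta b.
Proof.
  intros Ha Hab; apply saturated_closed.
  exact (D_mp _ _ _ (D_hyp _ _ Ha) (D_hyp _ _ Hab)).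
Qed.

Lemma saturated_and a b : Delta (And a b) <-> Delta a /\ Delta b.
Proof.
  split.
  - intro H; split; eapply saturated_mp; eauto; apply saturated_axiom; constructor.
  - intros [Ha Hb]; eapply saturated_mp; [exact Hb |].
    eapply saturated_mp; [exact Ha | apply saturated_axiom; constructor].
Qed.

(* The prime property: a formula outside Delta implies alpha, so two of them
   give alpha from their disjunction by Ax8. *)
Lemma saturated_or a b : Delta (Or a b) <-> Delta a \/ Delta b.
Proof.
  split.
  - intro Hab; apply NNPP; intro Hnone; apply (proj1 Delta_sat).
    assert (Da : derivable_L12 Delta (Imp a alpha))
      by (apply deduction, (proj2 Delta_sat); tauto).
    assert (Db : derivable_L12 Delta (Imp b alpha))
      by (apply deduction, (proj2 Delta_sat); tauto).
    eapply D_mp; [apply D_hyp, Hab |].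
    eapply D_mp; [exact Db |]. eapply D_mp; [exact Da | apply D_ax, Ax8].
  - intros [H | H]; eapply saturated_mp; eauto; apply saturated_axiom; constructor.
Qed.

Lemma saturated_imp a b : Delta (Imp a b) <-> (Delta a -> Delta b).
Proof.
  split; [intros; eapply saturated_mp; eauto |].
  intro Hab; destruct (proj1 (saturated_or _ _) (saturated_axiom _ (Ax9 a b)))
    as [Ha | Ha]; [| exact Ha].
  eapply saturated_mp; [apply Hab, Ha | apply saturated_axiom, Ax1].
Qed.

Lemma saturated_excluded_middle a : Delta a \/ Delta (Neg a).
Proof. apply saturated_or, saturated_axiom, AxTND. Qed.

Lemma saturated_neg_neg a : Delta (Neg (Neg a)) <-> Delta a.
Proof.
  split; intro H; (eapply saturated_mp; [exact H |]);
  apply saturated_axiom; constructor.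
Qed.

Lemma saturated_circ a : Delta (Circ a) <-> ~ (Delta a /\ Delta (Neg a)).
Proof.
  split.
  - intros Hc [Ha Hna]; apply saturated_not_alpha.
    eapply saturated_mp; [exact Hna |]. eapply saturated_mp; [exact Ha |].
    eapply saturated_mp; [exact Hc | apply saturated_axiom, AxBc1].
  - intro Hcons.
    destruct (proj1 (saturated_or _ _) (saturated_axiom _ (AxCiw a))) as [Hc | Hc];
      [exact Hc | apply saturated_and in Hc; tauto].
Qed.

Lemma saturated_neg_circ_neg a :
  Delta (Neg (Circ (Neg a))) <-> Delta (Neg (Circ a)).
Proof.
  pose proof (saturated_axiom _ (AxNCN a)) as H; unfold Iff in H.
  rewrite saturated_and, !saturated_imp in H; tauto.
Qed.

(* The axiom o o o a makes o o a consistent, so with excluded middle ~ o o a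
   holds exactly when o o a fails, i.e. when o a is inconsistent. *)
Lemma saturated_neg_circ_circ a :
  Delta (Neg (Circ (Circ a))) <-> Delta (Circ a) /\ Delta (Neg (Circ a)).
Proof.
  pose proof (proj1 (saturated_circ _) (saturated_axiom _ (AxCCC a))).
  pose proof (saturated_circ (Circ a)).
  pose proof (saturated_excluded_middle (Circ (Circ a))).
  tauto.
Qed.

End SaturatedTheory.

Definition truth (P : Prop) : bool :=
  if excluded_middle_informative P then true else false.

Ltac case_truth :=
  unfold truth; repeat match goal with |- context [excluded_middle_informative ?P] =>
    destruct (excluded_middle_informative P) end.

Definition canonical_valuation (Delta : formula -> Prop) (f : formula) : tv :=
  (truth (Delta f), truth (Delta (Neg f)), truth (Delta (Neg (Circ f)))).

Lemma canonical_designated Delta f :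
  designated (canonical_valuation Delta f) <-> Delta f.
Proof. unfold designated; cbn; case_truth; intuition discriminate. Qed.

Section CanonicalValuation.
Context {alpha : formula} {Delta : formula -> Prop}.
Hypothesis Delta_sat : saturated alpha Delta.

Lemma canonical_valuation_inB a : inB (canonical_valuation Delta a).
Proof.
  unfold inB; cbn.
  pose proof (saturated_excluded_middle Delta_sat a).
  pose proof (saturated_circ Delta_sat a).
  pose proof (saturated_excluded_middle Delta_sat (Circ a)).
  split; case_truth; cbn; try reflexivity; tauto.
Qed.

Lemma canonical_valuation_valuation : valuation (canonical_valuation Delta).
Proof.
  unfold valuation, mand, mor, mimp, mneg, mcirc.
  refine (conj canonical_valuation_inB
    (conj (fun a b => conj (canonical_valuation_inB _) _)
    (conj (fun a b => conj (canonical_valuation_inB _) _)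
    (conj (fun a b => conj (canonical_valuation_inB _) _)
    (conj (fun a => _) (fun a => _)))))); unfold canonical_valuation; cbn.
  - pose proof (saturated_and Delta_sat a b); case_truth; cbn; try reflexivity; tauto.
  - pose proof (saturated_or Delta_sat a b); case_truth; cbn; try reflexivity; tauto.
  - pose proof (saturated_imp Delta_sat a b); case_truth; cbn; try reflexivity; tauto.
  - pose proof (saturated_neg_neg Delta_sat a).
    pose proof (saturated_neg_circ_neg Delta_sat a).
    case_truth; cbn; try reflexivity; tauto.
  - pose proof (saturated_circ Delta_sat a).
    pose proof (saturated_neg_circ_circ Delta_sat a).
    case_truth; cbn; try reflexivity; tauto.
Qed.

End CanonicalValuation.

Lemma completeness Gamma a : entails_M12 Gamma a -> derivable_L12 Gamma a.
Proof.
  intro Hent; apply NNPP; intro Gamma_a.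
  destruct (lindenbaum Gamma a Gamma_a) as (Delta & Gamma_Delta & Delta_sat).
  apply (saturated_not_alpha Delta_sat), canonical_designated.
  apply Hent; [exact (canonical_valuation_valuation Delta_sat) |].
  intros g Hg; apply canonical_designated, Gamma_Delta, Hg.
Qed.

Theorem theorem10 :
  forall (Gamma : formula -> Prop) (alpha : formula),
    derivable_L12 Gamma alpha <-> entails_M12 Gamma alpha.
Proof.
  intros Gamma alpha; split; [apply soundness | apply completeness].
Qed.
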